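(* Let $(k_i)_{i\in\mathbb N}\subset\mathbb N$ satisfy $k_{2i}>1$ for infinitely many $i$ and $k_{2i-1}>1$ for infinitely many $i$, and let $\xi\in(0,1)$. If $\vec\xi=(\xi,\xi,\xi)$ does not belong to $W^s(\vec0)+\mathbb Z^3$, then $e^{2\pi i\xi}$ is not a continuous eigenvalue of the corresponding interval translation map (equivalently of its subshift $(X,\sigma)$).
   Context: For $0<\beta\le\alpha\le 1$ let $T_{\alpha,\beta}(x)=x+\alpha$ on $[0,1-\alpha)$, $x+\beta$ on $[1-\alpha,1-\beta)$, $x-1+\beta$ on $[1-\beta,1]$. With $U=\{0<\beta\le\alpha\le1\}$ and $G(\alpha,\beta)=(\beta/\alpha,(\beta-1)/\alpha+\lfloor1/\alpha\rfloor)$, the map is of infinite type if $G^n(\alpha,\beta)\in U^\circ$ for all $n\ge 0$; infinite type maps correspond bijectively to coding sequences $k_i=\lfloor1/\alpha_i\rfloor$, $(\alpha_i,\beta_i)=G^{i-1}(\alpha,\beta)$, which are exactly the sequences in the claim. For $k\in\mathbb N$ let $\chi_k$ be the substitution $1\mapsto2$, $2\mapsto31^k$, $3\mapsto31^{k-1}$, let $\rho=\lim_i\chi_{k_1}\circ\cdots\circ\chi_{k_i}(3)$ and $X$ the closure of the shift orbit of $\rho$; $(X,\sigma)$ is isomorphic to $T_{\alpha,\beta}$ on its Cantor attractor. Let $A_k=\begin{pmatrix}0&k&k-1\\1&0&0\\0&1&1\end{pmatrix}$ act on row vectors, $Q^-=\{x:x_1,x_2\ge0\ge x_3\}$, and let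 $W^s(\vec0)$ be the linear span of $\bigcap_{n\ge1}\{\vec x : \vec xA_{k_1}\cdots A_{k_n}\in Q^-\}$. A continuous eigenvalue $e^{2\pi i\xi}$ means there is a nonzero continuous $f:X\to\mathbb C$ with $f\circ\sigma=e^{2\pi i\xi}f$. *)

From mathcomp Require Import all_boot all_order all_algebra.
From mathcomp Require Import reals trigo.
From mathcomp Require Import complex.

Set Implicit Arguments.
Unset Strict Implicit.
Unset Printing Implicit Defensive.

Import Order.TTheory GRing.Theory Num.Theory.
Local Open Scope ring_scope.
Local Open Scope complex_scope.

(* Letters are the natural numbers 1, 2, 3. *)
Definition chi (k : nat) (a : nat) : seq nat :=
  match a with
  | 1 => [:: 2]
  | 2 => 3 :: nseq k 1
  | 3 => 3 :: nseq k.-1 1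
  | _ => [::]
  end.

Definition chi_word (k : nat) (w : seq nat) : seq nat := flatten (map (chi k) w).

(* w_i = chi_{k_1} o chi_{k_2} o ... o chi_{k_i} (3). *)
Definition chi_comp3 (k : nat -> nat) (i : nat) : seq nat :=
  foldr (fun j acc => chi_word (k j) acc) [:: 3] (iota 1 i)%N.

(* rho is the limit of the words chi_comp3 k i: every one of them is a prefix of rho. *)
Definition is_limit_word (k : nat -> nat) (rho : nat -> nat) : Prop :=
  forall i j, (j < size (chi_comp3 k i))%N -> rho j = nth 0 (chi_comp3 k i) j.

Definition shift (x : nat -> nat) : nat -> nat := fun j => x j.+1.

(* X = closure of the shift orbit of rho in the product topology:
   every finite prefix of x occurs in rho. *)
Definition orbit_closure (rho : nat -> nat) (x : nat -> nat) : Prop :=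
  forall N, exists n, forall j, (j < N)%N -> x j = rho (n + j)%N.

Definition continuous_on_subshift (R : realType) (X : (nat -> nat) -> Prop)
    (f : (nat -> nat) -> R[i]) : Prop :=
  forall x, X x -> forall e : R, 0 < e ->
    exists N, forall y, X y -> (forall j, (j < N)%N -> y j = x j) ->
      `|f y - f x| < e%:C.

Definition continuous_eigenvalue (R : realType) (X : (nat -> nat) -> Prop) (xi : R) : Prop :=
  exists f : (nat -> nat) -> R[i],
    continuous_on_subshift X f /\
    (exists x, X x /\ f x != 0) /\
    (forall x, X x -> f (shift x) = (cos (2 * pi * xi) +i* sin (2 * pi * xi)) * f x).

Definition Amat (R : realType) (k : nat) : 'M[R]_3 :=
  \matrix_(i < 3, j < 3)
    (match nat_of_ord i, nat_of_ord j with
     | 0, 1 => (k%:R : R)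
     | 0, 2 => k.-1%:R
     | 1, 0 => 1
     | 2, 1 => 1
     | 2, 2 => 1
     | _, _ => 0
     end).

Definition Aprod (R : realType) (k : nat -> nat) (n : nat) : 'M[R]_3 :=
  \prod_(1 <= i < n.+1) Amat R (k i).

Definition Qminus (R : realType) (x : 'rV[R]_3) : Prop :=
  0 <= x ord0 0 /\ 0 <= x ord0 1 /\ x ord0 2 <= 0.

Definition stable_cone (R : realType) (k : nat -> nat) (x : 'rV[R]_3) : Prop :=
  forall n, (1 <= n)%N -> Qminus (x *m Aprod R k n).

(* Linear span: finite linear combinations of elements of the cone. *)
Definition Ws (R : realType) (k : nat -> nat) (x : 'rV[R]_3) : Prop :=
  exists (m : nat) (c : 'I_m -> R) (v : 'I_m -> 'rV[R]_3),
    (forall l, stable_cone k (v l)) /\ x = \sum_(l < m) c l *: v l.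

Definition in_Ws_plus_Z3 (R : realType) (k : nat -> nat) (x : 'rV[R]_3) : Prop :=
  exists (w : 'rV[R]_3) (z : 'I_3 -> int),
    Ws k w /\ x = w + \row_(j < 3) (z j)%:~R.

From mathcomp Require Import all_boot all_order all_algebra.
From mathcomp Require Import boolp reals trigo.
From mathcomp Require Import complex.
From mathcomp Require Import ring lra zify.
Import Order.TTheory GRing.Theory Num.Theory.

(* Let f be a continuous eigenfunction for e^(2 i pi xi).  By continuity, xi p is
   close to an integer whenever shifting rho by p preserves a long prefix of rho.
   This holds for p = |sigma_n(u)|, where sigma_n = chi_(k_1) o ... o chi_(k_n) and u
   is any prefix of chi_(k_(n+1)) o ... o chi_(k_i)(3), as soon as n is large.
   Applying this to the blocks 3 1^j of chi_(k_(n+1))(3) and to a prefix followed by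
   the letter 1 (which occurs because some k_(n+1+2d) exceeds 1) shows that the
   signed distances e_n to the nearest integers of xi |sigma_n(a)|, a = 1, 2, 3,
   are eventually small enough to add up like the heights, hence obey their
   recursion e_(n+1) = e_n A_(k_(n+1)), with first coordinate tending to 0.  Thus
   xi (1,1,1) = v + z with z integral and v A_(k_1) ... A_(k_n) = e_n for n large.
   Along this orbit a sign pattern outside Q^- and -Q^- either persists, keeping
   the first coordinate away from 0, or alternates forever, and then the sum of
   the moduli of two consecutive first coordinates does not decrease.  So v or -v
   visits Q^- infinitely often, and since A_k^(-1) preserves Q^-, v or -v lies in
   the stable cone. *)

Set Implicit Arguments.
Unset Strict Implicit.
Unset Printing Implicit Defensive.

Section Words.
Variable k : nat -> nat.

Definition chi_seq (s : seq nat) (w : seq nat) : seq nat :=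
  foldr (fun j => chi_word (k j)) w s.

Definition sigma (n : nat) (w : seq nat) : seq nat := chi_seq (iota 1 n) w.

Definition tail_word (n i : nat) : seq nat := chi_seq (iota n.+1 (i - n)) [:: 3].

Definition height (n a : nat) : nat := size (sigma n [:: a]).

Definition letter (a : nat) : bool := 0 < a < 4.

Lemma chi_word_cat kk u v : chi_word kk (u ++ v) = chi_word kk u ++ chi_word kk v.
Proof. by rewrite /chi_word map_cat flatten_cat. Qed.

Lemma chi_word1 kk a : chi_word kk [:: a] = chi kk a.
Proof. by rewrite /chi_word /= cats0. Qed.

Lemma chi_seq_cat s u v : chi_seq s (u ++ v) = chi_seq s u ++ chi_seq s v.
Proof. by elim: s => //= j s ->; rewrite chi_word_cat. Qed.

Lemma chi_seq_nil s : chi_seq s [::] = [::].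
Proof. by elim: s => //= j s ->. Qed.

Lemma chi_seq_catl s1 s2 w : chi_seq (s1 ++ s2) w = chi_seq s1 (chi_seq s2 w).
Proof. by rewrite /chi_seq foldr_cat. Qed.

Lemma size_chi_seq_nseq s j a :
  size (chi_seq s (nseq j a)) = j * size (chi_seq s [:: a]).
Proof.
elim: j => [|j IH]; first by rewrite chi_seq_nil.
by rewrite -[nseq j.+1 a]/([:: a] ++ nseq j a) chi_seq_cat size_cat IH mulSn.
Qed.

Lemma sigma_cat n u v : sigma n (u ++ v) = sigma n u ++ sigma n v.
Proof. exact: chi_seq_cat. Qed.

Lemma sigmaS n w : sigma n.+1 w = sigma n (chi_word (k n.+1) w).
Proof. by rewrite /sigma -[n.+1]addn1 iotaD chi_seq_catl add1n addn1. Qed.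

Lemma sigma_tail_word n i : n <= i -> sigma n (tail_word n i) = chi_comp3 k i.
Proof. by move=> le_ni; rewrite /sigma -chi_seq_catl -iotaD subnKC. Qed.

Lemma tail_word_chi_word n i : n < i -> tail_word n i = chi_word (k n.+1) (tail_word n.+1 i).
Proof. by move=> lt_ni; rewrite /tail_word -subnSK. Qed.

Lemma tail_word_triv n i : i <= n -> tail_word n i = [:: 3].
Proof. by move=> le_in; rewrite /tail_word (eqP le_in). Qed.

Lemma tail_word_nSn n : tail_word n n.+1 = 3 :: nseq (k n.+1).-1 1.
Proof. by rewrite tail_word_chi_word // tail_word_triv // chi_word1. Qed.

Lemma TMP_tail_word_chi_word n i : n <= i ->
  tail_word n i.+1 = tail_word n i ++ chi_seq (iota n.+1 (i - n)) (nseq (k i.+1).-1 1).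
Proof.
move=> le_ni; rewrite /tail_word subSn // -[(i - n).+1]addn1 iotaD chi_seq_catl.
have -> : n.+1 + (i - n) = i.+1 by lia.
by rewrite /= chi_word1 -chi_seq_cat.
Qed.

Lemma tail_word_prefix n i i' : i <= i' -> exists t, tail_word n i' = tail_word n i ++ t.
Proof.
elim: i' => [|i' IH]; first by rewrite leqn0 => /eqP->; exists [::]; rewrite cats0.
rewrite leq_eqVlt => /orP[/eqP->|le_ii']; first by exists [::]; rewrite cats0.
case: (leqP n i') => [le_ni|lt_in].
  rewrite TMP_tail_word_chi_word //; have [t ->] := IH le_ii'; rewrite -catA; by eexists.
by exists [::]; rewrite cats0 !tail_word_triv //; lia.
Qed.

Lemma all_letter_chi kk a : all letter (chi kk a).
Proof. by case: a => [|[|[|[|a]]]] //=; rewrite all_nseq orbT. Qed.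

Lemma all_letter_chi_word kk w : all letter (chi_word kk w).
Proof.
by elim: w => // a w IH; rewrite -cat1s chi_word_cat chi_word1 all_cat all_letter_chi.
Qed.

Lemma all_letter_chi_seq s w : all letter w -> all letter (chi_seq s w).
Proof. by case: s => //= j s _; apply: all_letter_chi_word. Qed.

Lemma all_letter_tail_word n i : all letter (tail_word n i).
Proof. exact: all_letter_chi_seq. Qed.

Lemma chi_word_neq_nil kk w : all letter w -> w != [::] -> chi_word kk w != [::].
Proof.
case: w => // a w /andP[letter_a _] _.
by rewrite -cat1s chi_word_cat chi_word1; case: a letter_a => [|[|[|[|a]]]].
Qed.

Lemma chi_seq_neq_nil s w : all letter w -> w != [::] -> chi_seq s w != [::].
Proof.
elim: s => //= j s IH letter_w w_nz.
exact: chi_word_neq_nil (all_letter_chi_seq s letter_w) (IH letter_w w_nz).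
Qed.
Lemma chi_word2_head3 kk1 kk2 a : letter a ->
  exists t, chi_word kk1 (chi_word kk2 [:: a]) = 3 :: t.
Proof.
by case: a => [|[|[|[|a]]]] // _; rewrite chi_word1 /= /chi_word /=; eexists.
Qed.

End Words.

Section Heights.
Variable k : nat -> nat.

Lemma size_sigma_cat n u v :
  size (sigma k n (u ++ v)) = size (sigma k n u) + size (sigma k n v).
Proof. by rewrite sigma_cat size_cat. Qed.

Lemma size_sigma_nseq n j a : size (sigma k n (nseq j a)) = j * height k n a.
Proof. exact: size_chi_seq_nseq. Qed.

Lemma height0 a : height k 0 a = 1.
Proof. by []. Qed.

Lemma height1S n : height k n.+1 1 = height k n 2.
Proof. by rewrite /height sigmaS chi_word1. Qed.

Lemma height2S n : height k n.+1 2 = height k n 3 + k n.+1 * height k n 1.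
Proof. by rewrite /height sigmaS chi_word1 /= -cat1s size_sigma_cat size_sigma_nseq. Qed.

Lemma height3S n : height k n.+1 3 = height k n 3 + (k n.+1).-1 * height k n 1.
Proof. by rewrite /height sigmaS chi_word1 /= -cat1s size_sigma_cat size_sigma_nseq. Qed.

Lemma height_gt0 n a : letter a -> 0 < height k n a.
Proof. by move=> letter_a; rewrite lt0n size_eq0 chi_seq_neq_nil //= letter_a. Qed.

Lemma height3_mono m n : m <= n -> height k m 3 <= height k n 3.
Proof.
move=> /subnKC <-; elim: (n - m) => [|d IH]; first by rewrite addn0.
by rewrite addnS height3S (leq_trans IH) ?leq_addr.
Qed.

End Heights.

Section ReturnTimes.
Variables (k : nat -> nat) (rho : nat -> nat).
Hypothesis k_gt1_infinitely : forall N, exists i, N <= i /\ 1 < k i.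
Hypothesis rho_limit : is_limit_word k rho.

Lemma rho_recurs_at_block m i u a s : tail_word k m.+2 i = u ++ a :: s -> letter a ->
  forall j, j < size (chi_comp3 k m) -> rho (size (sigma k m.+2 u) + j) = rho j.
Proof.
move=> Ei letter_a j lt_j.
case: (leqP i m.+2) => [le_i|lt_i].
  move: Ei; rewrite tail_word_triv //.
  by case: u => [_|? [|? ?] //]; rewrite /sigma chi_seq_nil.
have [t Et] := chi_word2_head3 (k m.+1) (k m.+2) letter_a.
have Ea : sigma k m.+2 [:: a] = chi_comp3 k m ++ sigma k m t.
  by rewrite !sigmaS Et -cat1s sigma_cat.
have := sigma_tail_word k (ltnW lt_i); rewrite Ei -cat1s !sigma_cat Ea => Ec.
have lt_pos : size (sigma k m.+2 u) + j < size (chi_comp3 k i).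
  by rewrite -Ec !size_cat; lia.
rewrite (rho_limit lt_pos) -Ec nth_cat ltnNge leq_addr /= addKn.
by rewrite -catA nth_cat lt_j -(rho_limit lt_j).
Qed.

Lemma tail_word_extend n i : exists i' a t, tail_word k n i' = tail_word k n i ++ a :: t.
Proof.
have [j' [le_nj' le_ij' gt1]] : exists j', [/\ n <= j', i <= j' & 1 < k j'.+1].
  have [j [le_j gt1]] := k_gt1_infinitely (maxn n i).+1.
  by exists j.-1; rewrite prednK; [split=> //; lia | lia].
have [t Et] := tail_word_prefix k n le_ij'.
have := TMP_tail_word_chi_word k le_nj'; rewrite Et -catA.
have : chi_seq k (iota n.+1 (j' - n)) (nseq (k j'.+1).-1 1) != [::].
  by apply: chi_seq_neq_nil; rewrite ?all_nseq ?orbT // -size_eq0 size_nseq; lia.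
case: chi_seq => // a u _.
case Etv : (t ++ a :: u) => [|b v] Ej.
  by move/(congr1 size): Etv; rewrite size_cat /= addnS.
by exists j'.+1, b, v.
Qed.

Lemma height3_unbounded N : exists M, forall m, M <= m -> N <= height k m 3.
Proof.
elim: N => [|N [M IH]]; first by exists 0.
have [[|j] [le_Mj gt1]] := k_gt1_infinitely M.+1; first by [].
exists j.+1 => m le_jm; apply: leq_trans (height3_mono k le_jm).
have pos : 0 < (k j.+1).-1 * height k j 1 by rewrite muln_gt0 height_gt0 // andbT; lia.
by rewrite height3S; have := IH j le_Mj; lia.
Qed.

Lemma rho_recurs_at_tail_prefix N : exists M, forall n, M <= n -> forall i u s,
  tail_word k n i = u ++ s -> forall j, j < N -> rho (size (sigma k n u) + j) = rho j.
Proof.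
have [M HM] := height3_unbounded N.
exists M.+2 => [[|[|m]]] // le_n i u s Ei j lt_jN.
have [i' [a [t Ei']]] := tail_word_extend m.+2 i.
rewrite Ei -catA in Ei'.
case Ev : (s ++ a :: t) Ei' => [|b v] Ei'; first by case: s {Ei} Ev.
have letter_b : letter b.
  by apply: (allP (all_letter_tail_word k m.+2 i')); rewrite Ei' mem_cat in_cons eqxx orbT.
by apply: (rho_recurs_at_block Ei' letter_b); apply: leq_trans lt_jN (HM m _); lia.
Qed.

End ReturnTimes.

Lemma tail_word_has1 (k : nat -> nat) d n : (forall i, 1 <= i -> 0 < k i) ->
  1 < k (n.+1 + 2 * d) -> exists i u s, tail_word k n i = u ++ 1 :: s.
Proof.
move=> k_gt0; elim: d n => [|d IH] n.
  rewrite muln0 addn0 => gt1; exists n.+1, [:: 3], (nseq (k n.+1).-2 1).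
  by rewrite tail_word_nSn; case: (k n.+1) gt1 => [|[|kk]].
move=> gt1; have [i [u [s Ei]]] : exists i u s, tail_word k n.+2 i = u ++ 1 :: s.
  by apply: IH; rewrite (_ : n.+3 + 2 * d = n.+1 + 2 * d.+1) //; lia.
case: (leqP i n.+2) => [le_i|lt_i].
  by move: Ei; rewrite tail_word_triv //; case: u => [|? [|? ?]].
have [kk Ek] : exists kk, k n.+1 = kk.+1 by exists (k n.+1).-1; rewrite prednK ?k_gt0.
exists i, (chi_word (k n.+1) (chi_word (k n.+2) u) ++ [:: 3]),
  (nseq kk 1 ++ chi_word (k n.+1) (chi_word (k n.+2) s)).
rewrite tail_word_chi_word; last by lia.
rewrite tail_word_chi_word; last by lia.
by rewrite Ei -cat1s !chi_word_cat /chi_word /= Ek cats0 -!catA.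
Qed.

Lemma exists_gt1_at_odd_offset (k : nat -> nat) :
  (forall N, exists i, N <= i /\ 1 < k (2 * i)) ->
  (forall N, exists i, N <= i /\ 1 < k (2 * i).+1) ->
  forall n, exists d, 1 < k (n.+1 + 2 * d).
Proof.
move=> even_gt1 odd_gt1 n; have En := odd_double_half n; rewrite -addnn in En.
case/boolP: (odd n) En => odd_n En.
  have [i [le_i gt1]] := even_gt1 (n./2.+1); exists (i - n./2.+1).
  by rewrite (_ : _ + _ = 2 * i) //; lia.
have [i [le_i gt1]] := odd_gt1 n./2; exists (i - n./2).
by rewrite (_ : _ + _ = (2 * i).+1) //; lia.
Qed.

Section Rounding.
Variable R : realType.
Local Open Scope ring_scope.

Definition near_int (t d : R) : Prop := exists m : int, `|t - m%:~R| < d.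

Definition round (t : R) : int := Num.floor (t + 1/2).

Definition round_err (t : R) : R := t - (round t)%:~R.

Lemma round_err_itv t : -(1/2) <= round_err t < 1/2.
Proof.
have /andP[] := floor_itv (t + 1/2); rewrite /round_err /round intrD /=.
by move=> lo hi; apply/andP; split; lra.
Qed.

Lemma round_errE t (m : int) : `|t - m%:~R| < 1/2 -> round_err t = t - m%:~R.
Proof.
rewrite ltr_norml => /andP[lo hi]; rewrite /round_err /round.
by congr (_ - _%:~R); apply: floor_def; rewrite intrD; apply/andP; split; lra.
Qed.

Lemma round_errD a b : `|round_err a + round_err b| < 1/2 ->
  round_err (a + b) = round_err a + round_err b.
Proof.
move=> small; rewrite (round_errE (m := round a + round b)).
  by rewrite /round_err intrD; ring.
by move: small; rewrite /round_err intrD; congr (`|_| < _); ring.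
Qed.

Lemma round_err_le t : `|round_err t| <= 1/2.
Proof. by have /andP[] := round_err_itv t; rewrite ler_norml => lo /ltW ->; rewrite lo. Qed.

Lemma near_int_half t d : 1/2 < d -> near_int t d.
Proof. by move=> d_gt; exists (round t); apply: le_lt_trans (round_err_le t) d_gt. Qed.

Lemma round_err_lt t d : near_int t d -> `|round_err t| < d.
Proof.
case: (lerP d (1/2)) => [d_le [m near_m]|d_gt _].
  by rewrite (round_errE (m := m)) ?(lt_le_trans near_m).
exact: le_lt_trans (round_err_le t) d_gt.
Qed.

Lemma near_intB a b d : near_int a d -> near_int (a + b) d -> near_int b (d + d).
Proof.
move=> [m1 near1] [m2 near2]; exists (m2 - m1).
have -> : b - (m2 - m1)%:~R = (a + b - m2%:~R) - (a - m1%:~R) by rewrite intrB; ring.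
by apply: le_lt_trans (ler_normB _ _) _; apply: ltrD.
Qed.

End Rounding.

Section Eigenvalue.
Variable R : realType.
Local Open Scope ring_scope.
Local Open Scope complex_scope.

Definition expi2pi (t : R) : R[i] := cos (2 * pi * t) +i* sin (2 * pi * t).

Lemma expi2piD a b : expi2pi (a + b) = expi2pi a * expi2pi b.
Proof.
rewrite /expi2pi mulrDr cosD sinD.
by apply/eqP; rewrite eq_complex /=; apply/andP; split; apply/eqP; ring.
Qed.

Lemma expi2pi0 : expi2pi 0 = 1.
Proof. by rewrite /expi2pi mulr0 cos0 sin0. Qed.

Lemma expi2pi_nat (n : nat) : expi2pi n%:R = 1.
Proof.
elim: n => [|n IH]; first exact: expi2pi0.
by rewrite -addn1 natrD expi2piD IH /expi2pi mulr1 mulr_natl cos2pi sin2pi mul1r.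
Qed.

Lemma expi2pi_int (m : int) : expi2pi m%:~R = 1.
Proof.
case: m => n; first exact: expi2pi_nat.
have := expi2piD (Negz n)%:~R n.+1%:R.
by rewrite NegzE mulrNz addNr expi2pi0 expi2pi_nat mulr1.
Qed.

Lemma expi2piX t n : expi2pi t ^+ n = expi2pi (t * n%:R).
Proof.
elim: n => [|n IH]; first by rewrite expr0 mulr0 expi2pi0.
by rewrite exprS IH -expi2piD -addn1 natrD mulrDr mulr1 addrC.
Qed.

Lemma near_int_of_expi2pi t d : 0 < d <= 1/2 ->
  `|expi2pi t - 1| < (1 - cos (2 * pi * d))%:C -> near_int t d.
Proof.
move=> /andP[d_gt0 d_le] close; exists (round t); rewrite ltNge -/(round_err t).
apply/negP => far.
have pi_gt0 := pi_gt0 R.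
have abs_le := round_err_le t.
have Et : expi2pi t = expi2pi (round_err t).
  by rewrite -[in LHS](subrK (round t)%:~R t) expi2piD expi2pi_int mulr1.
have cos_le : cos (2 * pi * round_err t) <= cos (2 * pi * d).
  rewrite -cos_norm normrM (ger0_norm (_ : 0 <= 2 * pi)); last by lra.
  rewrite leNgt ltr_cos ?in_itv /= -?leNgt ?ler_pM2l //; try lra.
    by apply/andP; split; [apply: mulr_ge0; lra | nra].
  by apply/andP; split; nra.
rewrite Et in close; have := le_lt_trans (normc_ge_Re _) close.
by rewrite ltcR /= ler0_norm ?subr_le0 ?cos_le1 //; lra.
Qed.

Lemma normC_gt0 (z : R[i]) : z != 0 -> exists2 r : R, 0 < r & `|z| = r%:C.
Proof.
move=> z_neq0; have Ez : `|z| = (complex.Re `|z|)%:C by rewrite normc_def.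
by exists (complex.Re `|z|); rewrite // -ltcR -Ez normr_gt0.
Qed.

End Eigenvalue.

Lemma iter_shiftE (x : nat -> nat) m j : iter m shift x j = x (m + j).
Proof. by elim: m j => [|m IH] j //; rewrite iterS /shift IH addSnnS. Qed.

Section ContinuousEigenvalue.
Local Open Scope ring_scope.
Local Open Scope complex_scope.

Variables (R : realType) (rho : nat -> nat) (xi : R) (f : (nat -> nat) -> R[i]).
Hypothesis f_cont : continuous_on_subshift (orbit_closure rho) f.
Hypothesis f_neq0 : exists x, orbit_closure rho x /\ f x != 0.
Hypothesis f_eigen : forall x, orbit_closure rho x ->
  f (shift x) = (cos (2 * pi * xi) +i* sin (2 * pi * xi)) * f x.

Lemma orbit_closure_iter m : orbit_closure rho (iter m shift rho).
Proof. by move=> N; exists m => j _; rewrite iter_shiftE. Qed.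

Lemma eigen_iter m : f (iter m shift rho) = expi2pi xi ^+ m * f rho.
Proof.
elim: m => [|m IH]; first by rewrite mul1r.
rewrite iterS f_eigen; last exact: orbit_closure_iter.
by rewrite IH exprS mulrA.
Qed.

Lemma eigen_rho_neq0 : f rho != 0.
Proof.
have [x [Xx fx_neq0]] := f_neq0; have [r r_gt0 Er] := normC_gt0 fx_neq0.
have [N HN] := f_cont Xx r_gt0; have [m Hm] := Xx N.
have := HN _ (orbit_closure_iter m)
  (fun j lt_j => etrans (iter_shiftE rho m j) (esym (Hm j lt_j))).
apply: contraTneq => f_rho0.
by rewrite eigen_iter f_rho0 mulr0 sub0r normrN Er ltxx.
Qed.

Lemma near_int_return_times d : 0 < d -> exists N, forall p : nat,
  (forall j, (j < N)%N -> rho (p + j)%N = rho j) -> near_int (xi * p%:R) d.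
Proof.
move=> d_gt0; case: (lerP d (1/2)) => [d_le|d_gt]; last first.
  by exists 0%N => p _; apply: near_int_half.
have [r r_gt0 Er] := normC_gt0 eigen_rho_neq0.
have e_gt0 : 0 < 1 - cos (2 * pi * d).
  have pi_gt0 := pi_gt0 R.
  by rewrite subr_gt0 -[X in _ < X]cos0 ltr_cos ?in_itv /=; try (apply/andP; split); nra.
have [N HN] := f_cont (orbit_closure_iter 0) (mulr_gt0 e_gt0 r_gt0).
exists N => p Hp; apply: near_int_of_expi2pi; first by rewrite d_gt0 d_le.
have := HN _ (orbit_closure_iter p) (fun j lt_j => etrans (iter_shiftE rho p j) (Hp j lt_j)).
rewrite !eigen_iter expr0 mul1r -{2}(mul1r (f rho)) -mulrBl normrM Er expi2piX.
by rewrite rmorphM /= ltr_pM2r // ltcR.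
Qed.

End ContinuousEigenvalue.

Section Rows.
Variable R : realType.
Local Open Scope ring_scope.

Definition row3 (a b c : R) : 'rV[R]_3 :=
  \row_(j < 3) (if (j : nat) == 0%N then a else if (j : nat) == 1%N then b else c).

Lemma row3_0 a b c : row3 a b c ord0 0 = a. Proof. by rewrite mxE. Qed.
Lemma row3_1 a b c : row3 a b c ord0 1 = b. Proof. by rewrite mxE. Qed.
Lemma row3_2 a b c : row3 a b c ord0 2 = c. Proof. by rewrite mxE. Qed.

Lemma row3E (x : 'rV[R]_3) : x = row3 (x ord0 0) (x ord0 1) (x ord0 2).
Proof.
apply/rowP => -[[|[|[|j]]] lt_j] //; rewrite !mxE /=; congr (x _ _); exact: val_inj.
Qed.

Lemma row3B a b c a' b' c' : row3 a b c - row3 a' b' c' = row3 (a - a') (b - b') (c - c').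
Proof. by apply/rowP => j; rewrite !mxE; case: ifP => _ //; case: ifP. Qed.

Lemma const_mx_row3 a : const_mx a = row3 a a a.
Proof. by apply/rowP => j; rewrite !mxE; case: ifP => _ //; case: ifP. Qed.

Lemma row3_mulA a b c kk :
  row3 a b c *m Amat R kk = row3 b (kk%:R * a + c) (kk.-1%:R * a + c).
Proof.
apply/rowP => j; rewrite !mxE !big_ord_recl big_ord0 !mxE /=.
by case: j => [[|[|[|j]]] lt_j] //=; ring.
Qed.

Lemma AprodS k n : Aprod R k n.+1 = Aprod R k n *m Amat R (k n.+1).
Proof. by rewrite /Aprod big_nat_recr. Qed.

Lemma Aprod0 k : Aprod R k 0 = 1%:M.
Proof. by rewrite /Aprod big_geq. Qed.

Lemma Qminus_of_mulA (x : 'rV[R]_3) kk : (0 < kk)%N -> Qminus (x *m Amat R kk) -> Qminus x.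
Proof.
case: kk => // kk _; rewrite [x]row3E row3_mulA /Qminus !row3_0 !row3_1 !row3_2.
rewrite -[kk.+1%:R]natr1 /= => -[p_ge0 [q_ge0 r_le0]].
have x0_ge0 : 0 <= x ord0 0 by lra.
have : 0 <= kk%:R * x ord0 0 by rewrite mulr_ge0.
by split; [|split]; lra.
Qed.

Lemma stable_cone_of_frequent k (x : 'rV[R]_3) : (forall i, (1 <= i)%N -> (0 < k i)%N) ->
  (forall N, exists n, (N <= n)%N /\ Qminus (x *m Aprod R k n)) -> stable_cone k x.
Proof.
move=> k_gt0 frequent n _; have [m [le_nm Qm]] := frequent n.
rewrite -(subnKC le_nm) in Qm; elim: (m - n)%N Qm => [|d IH]; first by rewrite addn0.
by rewrite addnS AprodS mulmxA => /Qminus_of_mulA-/(_ (k_gt0 _ _)) /IH; apply.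
Qed.

Definition int_row (x : 'rV[R]_3) : Prop := exists z : 'I_3 -> int, x = \row_j (z j)%:~R.

Lemma int_row3 (a b c : int) : int_row (row3 a%:~R b%:~R c%:~R).
Proof.
exists (fun j => if (j : nat) == 0%N then a else if (j : nat) == 1%N then b else c).
by apply/rowP => j; rewrite !mxE; case: ifP => _ //; case: ifP.
Qed.

Lemma int_row_pullbackA kk x : (0 < kk)%N -> int_row x ->
  exists2 y, int_row y & y *m Amat R kk = x.
Proof.
case: kk => // kk _ [z ->]; rewrite [\row__ _]row3E !mxE.
move: (z ord0) (z 1) (z 2) => a b c.
exists (row3 (b - c)%:~R a%:~R (c - kk%:Z * (b - c))%:~R); first exact: int_row3.
rewrite row3_mulA !(intrB, intrM, mulrz_nat) -[kk.+1%:R]natr1 /=; congr row3; ring.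
Qed.

Lemma int_row_pullback k n x : (forall i, (1 <= i)%N -> (0 < k i)%N) -> int_row x ->
  exists2 y, int_row y & y *m Aprod R k n = x.
Proof.
move=> k_gt0; elim: n x => [|n IH] x int_x; first by exists x; rewrite // Aprod0 mulmx1.
have [y int_y <-] := int_row_pullbackA (k_gt0 n.+1 isT) int_x.
by have [w int_w <-] := IH y int_y; exists w; rewrite // AprodS mulmxA.
Qed.
End Rows.

Section ConeDynamics.
Variable R : realType.
Local Open Scope ring_scope.
Variables (p q r c : nat -> R).
Hypothesis c_ge0 : forall n, 0 <= c n.
Hypothesis pS : forall n, p n.+1 = q n.
Hypothesis rS : forall n, r n.+1 = c n * p n + r n.
Hypothesis qS : forall n, q n.+1 = r n.+1 + p n.
Hypothesis p_vanish : forall e, 0 < e -> exists M, forall n, (M <= n)%N -> `|p n| < e.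

Lemma pq_ge0_r_gt0_absurd n : 0 <= p n -> 0 <= q n -> 0 < r n -> False.
Proof.
move=> p_ge0 q_ge0 r_gt0.
have inv j : [/\ 0 <= p (n + j)%N, 0 <= q (n + j)%N & r n <= r (n + j)%N].
  elim: j => [|j [pj qj rj]]; first by rewrite addn0.
  by rewrite addnS pS qS rS; have := c_ge0 (n + j)%N; split; nra.
have [M HM] := p_vanish r_gt0; have [pM qM rM] := inv M.
have le_M : (M <= (n + M).+2)%N by lia.
have ck := c_ge0 (n + M)%N; have := HM _ le_M.
by rewrite pS qS rS ger0_norm; nra.
Qed.

End ConeDynamics.

Section ConeAlternative.
Variable R : realType.
Local Open Scope ring_scope.
Variables (p q r c : nat -> R).
Hypothesis c_ge0 : forall n, 0 <= c n.
Hypothesis pS : forall n, p n.+1 = q n.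
Hypothesis rS : forall n, r n.+1 = c n * p n + r n.
Hypothesis qS : forall n, q n.+1 = r n.+1 + p n.
Hypothesis p_vanish : forall e, 0 < e -> exists M, forall n, (M <= n)%N -> `|p n| < e.

Lemma pq_le0_r_lt0_absurd n : p n <= 0 -> q n <= 0 -> r n < 0 -> False.
Proof.
rewrite -!oppr_ge0 -oppr_gt0.
apply: (@pq_ge0_r_gt0_absurd _ (-%R \o p) (-%R \o q) (-%R \o r) c) => //=.
- by move=> m; rewrite pS.
- by move=> m; rewrite rS; ring.
- by move=> m; rewrite qS; ring.
- by move=> e e_gt0; have [M HM] := p_vanish e_gt0; exists M => m le_m; rewrite normrN HM.
Qed.

Lemma alternating_absurd N : (forall n, (N <= n)%N -> p n * q n < 0) -> False.
Proof.
move=> alt; have {}alt m : (N <= m)%N -> p m * p m.+1 < 0 by rewrite pS; apply: alt.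
pose b n := `|p n| + `|p n.+1|.
have b_mono n : (N <= n)%N -> b n <= b n.+2.
  move=> le_n; have a0 := alt n le_n; have a1 := alt n.+1 (leqW le_n).
  have a2 := alt n.+2 (leqW (leqW le_n)); have ck := c_ge0 n.+1.
  have p2E : p n.+2 = r n.+1 + p n by rewrite pS qS.
  have p3E : p n.+3 = c n.+1 * p n.+1 + r n.+1 + p n.+1 by rewrite pS qS rS.
  rewrite /b; case: (ltrP 0 (p n)) => p0.
    have p1 : p n.+1 < 0 by nra.
    have p2 : 0 < p n.+2 by nra.
    have p3 : p n.+3 < 0 by nra.
    by rewrite (gtr0_norm p0) (ltr0_norm p1) (gtr0_norm p2) (ltr0_norm p3); nra.
  have p1 : 0 < p n.+1 by nra.
  have p2 : p n.+2 < 0 by nra.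
  have p3 : 0 < p n.+3 by nra.
  by rewrite (ler0_norm p0) (gtr0_norm p1) (ltr0_norm p2) (gtr0_norm p3); nra.
have b_grow j : b N <= b (N + j.*2)%N.
  elim: j => [|j IH]; first by rewrite addn0.
  by rewrite doubleS !addnS; apply: le_trans IH (b_mono _ (leq_addr _ _)).
have bN_gt0 : 0 < b N.
  have : p N != 0 by apply: contraTneq (alt N (leqnn N)) => ->; rewrite mul0r ltxx.
  by rewrite -normr_gt0 /b => ?; have := normr_ge0 (p N.+1); lra.
have [M HM] := p_vanish (divr_gt0 bN_gt0 (ltr0n R 2)).
have le_M : (M <= N + M.*2)%N by rewrite -addnn addnA leq_addl.
by have := HM _ le_M; have := HM _ (leqW le_M); have := b_grow M; rewrite /b; lra.
Qed.

Lemma Qminus_or_opp_frequent N : exists n, (N <= n)%N /\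
  ((0 <= p n /\ 0 <= q n /\ r n <= 0) \/ (p n <= 0 /\ q n <= 0 /\ 0 <= r n)).
Proof.
have [[n [le_n pq_ge0]] | none] := pselect (exists n, (N <= n)%N /\ 0 <= p n * q n).
  exists n; split=> //.
  have [[p_ge0 q_ge0]|[p_le0 q_le0]] : (0 <= p n /\ 0 <= q n) \/ (p n <= 0 /\ q n <= 0).
    by case: (lerP 0 (p n)) => ?; case: (lerP 0 (q n)) => ?; [left | right | right | right];
      split; nra.
    left; do !split => //; rewrite leNgt; apply/negP.
    exact: (pq_ge0_r_gt0_absurd c_ge0 pS rS qS p_vanish p_ge0 q_ge0).
  right; do !split => //; rewrite leNgt; apply/negP.
  exact: pq_le0_r_lt0_absurd p_le0 q_le0.
exfalso; apply: (@alternating_absurd N) => n le_n; rewrite ltNge; apply/negP => pq_ge0.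
by apply: none; exists n.
Qed.
End ConeAlternative.

Section StableCone.
Variables (R : realType) (k : nat -> nat).
Local Open Scope ring_scope.
Hypothesis k_gt0 : forall i, (1 <= i)%N -> (0 < k i)%N.

Lemma stable_cone_or_opp (x : 'rV[R]_3) :
  (forall e, 0 < e -> exists M, forall n, (M <= n)%N -> `|(x *m Aprod R k n) ord0 0| < e) ->
  stable_cone k x \/ stable_cone k (- x).
Proof.
move=> vanish; pose y n := x *m Aprod R k n.
pose p n := y n ord0 0; pose q n := y n ord0 1; pose r n := y n ord0 2.
pose c n : R := (k n.+1).-1%:R.
have yS n : y n.+1 = row3 (q n) ((k n.+1)%:R * p n + r n) (c n * p n + r n).
  by rewrite /y AprodS mulmxA [X in X *m _]row3E row3_mulA.
have pS n : p n.+1 = q n by rewrite /p yS row3_0.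
have rS n : r n.+1 = c n * p n + r n by rewrite /r yS row3_2.
have qS n : q n.+1 = r n.+1 + p n.
  have kE : (k n.+1)%:R = c n + 1 :> R by rewrite /c natr1 prednK ?k_gt0.
  by rewrite /q rS yS row3_1 kE; ring.
have frequent := Qminus_or_opp_frequent (fun n => ler0n _ _) pS rS qS vanish.
have [freq|/existsNP[N0 /forallNP not_Q]] :=
  pselect (forall N, exists n, (N <= n)%N /\ Qminus (y n)).
  by left; apply: stable_cone_of_frequent.
right; apply: stable_cone_of_frequent => // N.
have [n [le_n [[p_ge0 [q_ge0 r_le0]]|[p_le0 [q_le0 r_ge0]]]]] := frequent (maxn N N0).
  by case: (not_Q n); split; [lia | exact: (conj p_ge0 (conj q_ge0 r_le0))].
exists n; split; first lia.
rewrite /Qminus mulNmx -/(y n) ![(- y n) _ _]mxE !oppr_ge0 oppr_le0.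
exact: (conj p_le0 (conj q_le0 r_ge0)).
Qed.

Lemma Ws_scale_stable_cone a (x : 'rV[R]_3) : stable_cone k x -> Ws k (a *: x).
Proof. by move=> cone_x; exists 1%N, (fun=> a), (fun=> x); rewrite big_ord1. Qed.

End StableCone.

Section HeightErrors.
Variables (R : realType) (k : nat -> nat) (xi : R).
Local Open Scope ring_scope.

Lemma const_mx_mul_Aprod n : const_mx xi *m Aprod R k n =
  row3 (xi * (height k n 1)%:R) (xi * (height k n 2)%:R) (xi * (height k n 3)%:R).
Proof.
elim: n => [|n IH]; first by rewrite Aprod0 mulmx1 const_mx_row3 !height0 mulr1.
rewrite AprodS mulmxA IH row3_mulA height1S height2S height3S !natrD !natrM.
by congr row3; ring.
Qed.

Hypothesis k_gt0 : forall i, (1 <= i)%N -> (0 < k i)%N.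
Hypothesis letter1_occurs : forall n, exists i u s, tail_word k n i = u ++ 1%N :: s.
Hypothesis tail_prefix_near_int : forall d, 0 < d ->
  exists M, forall n, (M <= n)%N -> forall i u s, tail_word k n i = u ++ s ->
  near_int (xi * (size (sigma k n u))%:R) d.

Let herr n a := round_err (xi * (height k n a)%:R).
Let herr_row n := row3 (herr n 1) (herr n 2) (herr n 3).

Lemma herr1_small d : 0 < d -> exists M, forall n, (M <= n)%N -> `|herr n 1| < d.
Proof.
move=> d_gt0; have [M HM] := tail_prefix_near_int (divr_gt0 d_gt0 (ltr0n R 2)).
exists M => n le_n; have [i [u [s Ei]]] := letter1_occurs n.
have near_u := HM n le_n i u (1%N :: s) Ei.
have near_u1 : near_int (xi * (size (sigma k n (u ++ [:: 1%N])))%:R) (d / 2).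
  by apply: (HM n le_n i _ s); rewrite -catA.
rewrite size_sigma_cat natrD mulrDr in near_u1.
by apply: round_err_lt; rewrite [d]splitr; apply: near_intB near_u near_u1.
Qed.

Lemma round_err_tail_blocks_small : exists M, forall n, (M <= n)%N ->
  forall j, (j <= (k n.+1).-1)%N ->
  `|round_err (xi * ((height k n 3)%:R + j%:R * (height k n 1)%:R))| < 1/4.
Proof.
have [M HM] := tail_prefix_near_int (d := 1/4) ltac:(lra).
exists M => n le_n j le_j.
have Ej : tail_word k n n.+1 = ([:: 3%N] ++ nseq j 1%N) ++ nseq ((k n.+1).-1 - j) 1%N.
  by rewrite tail_word_nSn -catA -nseqD subnKC.
have := HM n le_n _ _ _ Ej; rewrite size_sigma_cat size_sigma_nseq natrD natrM.
by apply: round_err_lt.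
Qed.

Lemma round_err_tail_blocks : exists M, forall n, (M <= n)%N -> forall j, (j <= k n.+1)%N ->
  round_err (xi * ((height k n 3)%:R + j%:R * (height k n 1)%:R)) = herr n 3 + j%:R * herr n 1.
Proof.
have [M1 small1] := herr1_small (d := 1/4) ltac:(lra).
have [M2 small_tail] := round_err_tail_blocks_small.
exists (maxn M1 M2) => n le_n; elim=> [|j IH] lt_j; first by rewrite !mul0r !addr0.
have le_j : (j <= (k n.+1).-1)%N by rewrite -ltnS prednK ?k_gt0.
have tail_small := small_tail n (leq_trans (leq_maxr _ _) le_n) j le_j.
have one_small := small1 n (leq_trans (leq_maxl _ _) le_n); rewrite /herr in one_small.
have -> : xi * ((height k n 3)%:R + j.+1%:R * (height k n 1)%:R) =
    xi * ((height k n 3)%:R + j%:R * (height k n 1)%:R) + xi * (height k n 1)%:R.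
  by rewrite -natr1; ring.
rewrite round_errD; last by apply: le_lt_trans (ler_normD _ _) _; lra.
by rewrite IH ?(ltnW lt_j) // -natr1 /herr; ring.
Qed.

Lemma herr_rowS :
  exists M, forall n, (M <= n)%N -> herr_row n.+1 = herr_row n *m Amat R (k n.+1).
Proof.
have [M lin] := round_err_tail_blocks; exists M => n le_n.
rewrite /herr_row row3_mulA {1 2 3}/herr height1S height2S height3S !natrD !natrM.
by rewrite !lin ?leq_pred //; congr row3; ring.
Qed.

Lemma const_in_Ws_plus_Z3 : in_Ws_plus_Z3 k (const_mx xi).
Proof.
have [n0 herr_rowS_n] := herr_rowS.
have [z [zf Ezf] Ez] := int_row_pullback n0 k_gt0 (@int_row3 R
  (round (xi * (height k n0 1)%:R)) (round (xi * (height k n0 2)%:R))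
  (round (xi * (height k n0 3)%:R))).
pose v := const_mx xi - z.
have v_orbit d : v *m Aprod R k (n0 + d) = herr_row (n0 + d).
  elim: d => [|d IH]; first by rewrite addn0 mulmxBl Ez const_mx_mul_Aprod row3B.
  by rewrite addnS AprodS mulmxA IH herr_rowS_n // leq_addr.
have vanish e : 0 < e -> exists M, forall n, (M <= n)%N -> `|(v *m Aprod R k n) ord0 0| < e.
  move=> e_gt0; have [M HM] := herr1_small e_gt0; exists (maxn n0 M) => n le_n.
  by rewrite -(subnKC (leq_trans (leq_maxl _ _) le_n)) v_orbit row3_0 HM //; lia.
exists v, zf; split; last by rewrite -Ezf /v subrK.
have [cone|cone] := stable_cone_or_opp k_gt0 vanish.
  by rewrite -[v]scale1r; apply: Ws_scale_stable_cone.
by rewrite -[v]opprK -scaleN1r; apply: Ws_scale_stable_cone.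
Qed.

End HeightErrors.

Local Open Scope ring_scope.

Theorem theorem3p8 (R : realType) (k : nat -> nat) (xi : R) (rho : nat -> nat) :
  (forall i, (1 <= i)%N -> (0 < k i)%N) ->
  (forall N, exists i, (N <= i)%N /\ (1 < k (2 * i))%N) ->
  (forall N, exists i, (N <= i)%N /\ (1 < k (2 * i).+1)%N) ->
  0 < xi < 1 ->
  is_limit_word k rho ->
  ~ in_Ws_plus_Z3 k (const_mx xi) ->
  ~ continuous_eigenvalue (orbit_closure rho) xi.
Proof.
move=> k_gt0 even_gt1 odd_gt1 _ rho_limit not_in_Ws [f [f_cont [f_neq0 f_eigen]]].
have k_gt1 N : exists i, (N <= i)%N /\ (1 < k i)%N.
  by have [i [le_i gt1]] := even_gt1 N; exists (2 * i)%N; split=> //; lia.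
apply/not_in_Ws/(const_in_Ws_plus_Z3 k_gt0).
  move=> n; have [d gt1] := exists_gt1_at_odd_offset even_gt1 odd_gt1 n.
  exact: tail_word_has1 k_gt0 gt1.
move=> d d_gt0; have [N HN] := near_int_return_times f_cont f_neq0 f_eigen d_gt0.
have [M HM] := rho_recurs_at_tail_prefix k_gt1 rho_limit N.
by exists M => n le_n i u s Ei; apply: HN => j; apply: HM Ei j.
Qed.
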